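(* Let $E$ be a Stone space with at least five points. Then the graph $\mathscr{C}(E)$ is connected. Moreover, if $E$ is finite then $\mathscr{C}(E)$ has diameter at most four, while if $E$ is infinite then $\mathscr{C}(E)$ has diameter exactly two.
   Context: A Stone space is a compact, Hausdorff, totally disconnected topological space. A cut of $E$ is an unordered partition of $E$ into two disjoint clopen sets $U,V$, written $U\sqcup V$. A cut is non-peripheral if each of $U$ and $V$ contains at least two points. Two cuts $U\sqcup V$ and $U'\sqcup V'$ cross if all four sets $U\cap U'$, $U\cap V'$, $V\cap U'$, $V\cap V'$ are nonempty; otherwise they are compatible. The complex of cuts $\mathscr{C}(E)$ is the simplicial graph whose vertices are the non-peripheral cuts of $E$, with an edge between two distinct cuts whenever they are compatible. *)

From mathcomp Require Import all_boot all_order.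
From mathcomp Require Import all_classical all_reals all_analysis.
Set Implicit Arguments. Unset Strict Implicit. Unset Printing Implicit Defensive.
Local Open Scope classical_set_scope.

Definition stone_space (E : topologicalType) : Prop :=
  [/\ compact [set: E], hausdorff_space E & totally_disconnected [set: E]].

(* A cut U ⊔ V is represented by the clopen set U (with V = ~` U).
   The (unordered) cut determined by U equals that determined by U'
   iff U' = U or U' = ~` U. *)
Definition same_cut {E : topologicalType} (U U' : set E) : Prop :=
  U' = U \/ U' = ~` U.

Definition nonperipheral_cut {E : topologicalType} (U : set E) : Prop :=
  [/\ clopen U, clopen (~` U),
      (exists x y, [/\ U x, U y & x <> y]) &
      (exists x y, [/\ (~` U) x, (~` U) y & x <> y])].

Definition cuts_cross {E : topologicalType} (U U' : set E) : Prop :=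
  [/\ U `&` U' !=set0, U `&` ~` U' !=set0,
      ~` U `&` U' !=set0 & ~` U `&` ~` U' !=set0].

Definition cut_adj {E : topologicalType} (U U' : set E) : Prop :=
  [/\ nonperipheral_cut U, nonperipheral_cut U',
      ~ same_cut U U' & ~ cuts_cross U U'].

(* cut_within n U U' : the vertices (cuts) represented by U and U' are at
   distance at most n in the complex of cuts C(E). *)
Fixpoint cut_within {E : topologicalType} (n : nat) (U U' : set E) : Prop :=
  match n with
  | 0 => nonperipheral_cut U /\ same_cut U U'
  | S m => cut_within m U U' \/ exists W, cut_within m U W /\ cut_adj W U'
  end.

Definition cut_complex_connected (E : topologicalType) : Prop :=
  forall U U' : set E, nonperipheral_cut U -> nonperipheral_cut U' ->
    exists n, cut_within n U U'.

Definition cut_complex_diam_le (E : topologicalType) (n : nat) : Prop :=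
  forall U U' : set E, nonperipheral_cut U -> nonperipheral_cut U' ->
    cut_within n U U'.

Definition cut_complex_diam_eq (E : topologicalType) (n : nat) : Prop :=
  cut_complex_diam_le E n /\
  (forall m, (m < n)%N -> ~ cut_complex_diam_le E m).

(* Two crossing non-peripheral cuts U, V split E into four non-empty quadrants
   U ∩ V, U \ V, V \ U and E \ (U ∪ V).  With five points, one quadrant Q
   contains two points; Q is then a non-peripheral cut compatible with both U
   and V, so any two vertices of C(E) are at distance at most 2.  Conversely a
   Stone space is zero-dimensional (its quasi-components, which are connected
   by compactness, are points), so clopen sets can realise any partition of
   four chosen points into two pairs; this gives two crossing cuts, which are
   at distance exactly 2. *)

From mathcomp Require Import all_boot all_order.
From mathcomp Require Import all_classical all_reals all_analysis.
Set Implicit Arguments.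
Unset Strict Implicit.
Unset Printing Implicit Defensive.
Local Open Scope classical_set_scope.

Section QuasiComponent.
Variable E : topologicalType.
Hypothesis cptE : compact [set: E].

Definition quasi_component (x : E) :=
  \bigcap_(C in [set C : set E | clopen C /\ C x]) C.

Lemma closed_quasi_component x : closed (quasi_component x).
Proof. by apply: closed_bigI => C [[_]]. Qed.

Lemma quasi_component_sub_open x W : open W -> quasi_component x `<=` W ->
  exists C, [/\ clopen C, C x & C `<=` W].
Proof.
move=> oW QW; apply: contrapT => noC.
pose F := filter_from [set C : set E | clopen C /\ C x] (fun C => C `\` W).
have FF : Filter F.
  apply: filter_from_filter; first by exists setT; split => //; exact: clopenT.
  move=> A B [clA Ax] [clB Bx]; exists (A `&` B); first by split; [exact: clopenI|].
  by move=> z [[Az Bz] nWz].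
have PF : ProperFilter F.
  apply: filter_from_proper => C [clC Cx]; apply: contrapT => /set0P/negP.
  rewrite negbK => /eqP; rewrite setD_eq0 => CW; apply: noC; by exists C.
have [p [_ clusterp]] := cptE PF filterT.
have inF C : clopen C -> C x -> C p /\ ~ W p.
  move=> clC Cx; have cCW : closed (C `\` W).
    by apply: closedI; [case: clC | exact: open_closedC].
  apply: cCW => B nB; apply: clusterp nB; by exists C.
have [_ nWp] := inF _ clopenT I.
by apply/nWp/QW => C [clC Cx]; case: (inF C clC Cx).
Qed.

Hypothesis hsdE : hausdorff_space E.

Lemma closed_disjoint_separation (P R : set E) : closed P -> closed R ->
  P `&` R = set0 ->
  exists U V, [/\ open U, open V, P `<=` U, R `<=` V & U `&` V = set0].
Proof.
move=> cP cR PR0.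
have nRP : set_nbhs P (~` R).
  apply/set_nbhsP; exists (~` R); split => //; first exact: closed_openC.
  by move=> z Pz Rz; rewrite -[False]/(set0 z) -PR0.
have [D nDP clDR] := compact_normal hsdE cptE cP nRP.
have [U [oU PU UD]] := (set_nbhsP P D).1 nDP.
exists U, (~` closure D); split => //.
- exact/closed_openC/closed_closure.
- by move=> z Rz /clDR.
- by apply/seteqP; split => z // [/UD/subset_closure].
Qed.

(* Separate P and R by disjoint open sets U, V; a clopen C around x inside
   U ∪ V gives the clopen C ∩ U = C \ V around x. *)
Lemma quasi_component_sub_closed x (P R : set E) : closed P -> closed R ->
  P `&` R = set0 -> quasi_component x `<=` P `|` R -> P x ->
  quasi_component x `<=` P.
Proof.
move=> cP cR PR0 QPR Px.
have [U [V [oU oV PU RV UV0]]] := closed_disjoint_separation cP cR PR0.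
have [C [[oC cC] Cx CUV]] := quasi_component_sub_open (openU oU oV)
  (subset_trans QPR (setUSS PU RV)).
have CUE : C `&` U = C `\` V.
  apply/seteqP; split=> z [Cz Hz]; split => //.
    by move=> Vz; rewrite -[False]/(set0 z) -UV0.
  by case: (CUV z Cz).
have QU : quasi_component x `<=` U.
  move=> z Qz; have [] // := Qz (C `&` U); split; last by split => //; exact: PU.
  split; first exact: openI.
  by rewrite CUE; apply: closedI => //; exact: open_closedC.
move=> z Qz; case: (QPR z Qz) => // Rz.
have : (U `&` V) z by split; [exact: QU | exact: RV].
by rewrite UV0.
Qed.

Lemma connected_quasi_component x : connected (quasi_component x).
Proof.
have Qx : quasi_component x x by move=> C [].
move=> B [b Bb] [G oG BQG] [K cK BQK].
have BQ : B `<=` quasi_component x by rewrite BQG => ? [].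
have cB : closed B by rewrite BQK; apply: closedI => //; exact: closed_quasi_component.
pose R := quasi_component x `\` G.
have cR : closed R.
  by apply: closedI; [exact: closed_quasi_component | exact: open_closedC].
have BR0 : B `&` R = set0.
  by apply/seteqP; split => // z [+ [_ nGz]]; rewrite BQG => -[].
have QBR : quasi_component x `<=` B `|` R.
  by move=> z Qz; have [Gz|] := pselect (G z); [left; rewrite BQG|right].
have [Bx|nBx] := pselect (B x).
  by apply/seteqP; split => //; exact: quasi_component_sub_closed QBR Bx.
have /(_ b (BQ b Bb)) [_ []] : quasi_component x `<=` R.
  apply: (quasi_component_sub_closed cR cB); first by rewrite setIC.
    by move=> z /QBR; rewrite setUC.
  by split => // Gx; apply: nBx; rewrite BQG.
by move: Bb; rewrite BQG => -[].
Qed.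

End QuasiComponent.

Lemma stone_zero_dimensional (E : topologicalType) :
  stone_space E -> zero_dimensional E.
Proof.
case=> cptE hsdE tdE x y /eqP xy; apply: contrapT => nsep.
have Qy : quasi_component x y.
  by move=> C [clC Cx]; apply: contrapT => nCy; apply: nsep; exists C.
suff : connected_component [set: E] x y by rewrite tdE // => /esym.
exists (quasi_component x) => //.
by split=> //; [move=> C [] | exact: connected_quasi_component].
Qed.

Section ZeroDimensional.
Variable E : topologicalType.
Hypothesis zdE : zero_dimensional E.

Lemma zero_dimensional_sep2 (a c d : E) : a <> c -> a <> d ->
  exists U, [/\ clopen U, U a, ~ U c & ~ U d].
Proof.
move=> /eqP ac /eqP ad.
have [[U [clU Ua nUc]] [V [clV Va nVd]]] := (zdE ac, zdE ad).
by exists (U `&` V); split => //; [exact: clopenI | case | case].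
Qed.

Lemma zero_dimensional_sep22 (a b c d : E) :
  a <> c -> a <> d -> b <> c -> b <> d ->
  exists U, [/\ clopen U, U a, U b, ~ U c & ~ U d].
Proof.
move=> ac ad bc bd.
have [[U [clU Ua nUc nUd]] [V [clV Vb nVc nVd]]] :=
  (zero_dimensional_sep2 ac ad, zero_dimensional_sep2 bc bd).
by exists (U `|` V); split; [exact: clopenU | left | right | case | case].
Qed.

End ZeroDimensional.

Section Cuts.
Variable E : topologicalType.
Implicit Types U V W : set E.

Lemma nonperipheral_cutC U : nonperipheral_cut (~` U) = nonperipheral_cut U.
Proof. by rewrite /nonperipheral_cut setCK propeqE; split=> -[? ? ? ?]; split. Qed.

Lemma same_cutC U V : same_cut U V = same_cut V U.
Proof.
by rewrite /same_cut propeqE; split=> -[->|->]; rewrite ?setCK; [left|right|left|right].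
Qed.

Lemma same_cutCl U V : same_cut (~` U) V = same_cut U V.
Proof. by rewrite /same_cut setCK propeqE; split=> -[]; [right|left|right|left]. Qed.

Lemma same_cutCr U V : same_cut U (~` V) = same_cut U V.
Proof. by rewrite same_cutC same_cutCl same_cutC. Qed.

Lemma cuts_cross_sym U V : cuts_cross U V -> cuts_cross V U.
Proof. by case=> ? ? ? ?; split; rewrite setIC. Qed.

Lemma cuts_crossCl U V : cuts_cross (~` U) V = cuts_cross U V.
Proof. by rewrite /cuts_cross setCK propeqE; split=> -[? ? ? ?]; split. Qed.

Lemma cuts_crossCr U V : cuts_cross U (~` V) = cuts_cross U V.
Proof. by rewrite /cuts_cross setCK propeqE; split=> -[? ? ? ?]; split. Qed.

Lemma cut_adj_sym U V : cut_adj U V -> cut_adj V U.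
Proof.
by case=> nU nV sUV cUV; split=> //; [rewrite same_cutC | move/cuts_cross_sym].
Qed.

Lemma cut_adjCr U V : cut_adj U (~` V) = cut_adj U V.
Proof. by rewrite /cut_adj nonperipheral_cutC same_cutCr cuts_crossCr. Qed.

Lemma cut_withinCl n U V : cut_within n (~` U) V = cut_within n U V.
Proof.
elim: n V => [|n IHn] V /=; first by rewrite nonperipheral_cutC same_cutCl.
by under eq_exists do rewrite IHn; rewrite IHn.
Qed.

Lemma cut_withinCr n U V : cut_within n U (~` V) = cut_within n U V.
Proof.
elim: n => [|n IHn] /=; first by rewrite same_cutCr.
by under eq_exists do rewrite cut_adjCr; rewrite IHn.
Qed.

Lemma cut_within_le m n U V : (m <= n)%N -> cut_within m U V -> cut_within n U V.
Proof.
elim: n => [|n IHn]; first by rewrite leqn0 => /eqP->.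
by rewrite leq_eqVlt ltnS => /orP[/eqP-> // | /IHn mn /mn]; left.
Qed.

Lemma cut_within2_adj U W V : nonperipheral_cut U ->
  cut_adj U W -> cut_adj W V -> cut_within 2 U V.
Proof.
move=> nU UW WV; right; exists W; split=> //.
by right; exists U; split=> //; split=> //; left.
Qed.

Lemma cuts_cross_not_within1 U V : cuts_cross U V -> ~ cut_within 1 U V.
Proof.
move=> cUV [[_ [] VE]|[W [[_ [] WE] [_ _ _ []]]]].
- by move: cUV; rewrite VE => -[_ [z []]].
- by move: cUV; rewrite VE => -[[z []]].
- by rewrite WE.
- by rewrite WE cuts_crossCl.
Qed.

Lemma cross_nonperipheral U V : clopen U -> clopen V -> cuts_cross U V ->
  nonperipheral_cut U /\ nonperipheral_cut V.
Proof.
move=> clU clV [[a [Ua Va]] [b [Ub nVb]] [c [nUc Vc]] [d [nUd nVd]]].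
have [clCU clCV] := (clopenC set0 clU, clopenC set0 clV).
split; split=> //.
- by exists a, b; split=> // ab; apply: nVb; rewrite -ab.
- by exists c, d; split=> // cd; apply: nVd; rewrite -cd.
- by exists a, c; split=> // ac; apply: nUc; rewrite -ac.
- by exists b, d; split=> // bd; apply: nUd; rewrite -bd.
Qed.

Lemma cut_adj_meet U V : nonperipheral_cut U -> nonperipheral_cut V ->
  cuts_cross U V -> (exists x y, [/\ U x, U y, V x, V y & x <> y]) ->
  cut_adj (U `&` V) U.
Proof.
move=> nU [clV _ _ _] [_ [p [Up nVp]] [q [nUq Vq]] _] [x [y [Ux Uy Vx Vy xy]]].
have clUV : clopen (U `&` V) by case: nU => clU _ _ _; exact: clopenI.
split=> //.
- split=> //; first exact: clopenC set0 clUV.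
    by exists x, y.
  by exists p, q; split=> [[]|[]|pq] //; apply: nUq; rewrite -pq.
- case=> UE; first by apply: nVp; have [] : (U `&` V) p by rewrite -UE.
  by have /(_ (conj Ux Vx)) : (~` (U `&` V)) x by rewrite -UE.
- by case=> _ [z [[Uz _] []]].
Qed.

Lemma cut_within2_cross U V x y : x <> y ->
  (U x <-> U y) -> (V x <-> V y) ->
  nonperipheral_cut U -> nonperipheral_cut V -> cuts_cross U V ->
  cut_within 2 U V.
Proof.
move=> xy; wlog Ux : U / U x => [HU|].
  have [/HU // | nUx Uxy] := pselect (U x).
  rewrite -cut_withinCl -nonperipheral_cutC -cuts_crossCl; apply: HU => //.
  by split; apply: contra_not; apply Uxy.
wlog Vx : V / V x => [HV|].
  have [/HV // | nVx Uxy Vxy] := pselect (V x).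
  rewrite -cut_withinCr -(nonperipheral_cutC V) -cuts_crossCr; apply: HV => //.
  by split; apply: contra_not; apply Vxy.
move=> Uxy Vxy nU nV cUV.
have [Uy Vy] : U y /\ V y by split; [apply/Uxy | apply/Vxy].
apply: (cut_within2_adj nU (cut_adj_sym (cut_adj_meet nU nV cUV _))).
  by exists x, y.
rewrite setIC; apply: cut_adj_meet nV nU (cuts_cross_sym cUV) _.
by exists x, y.
Qed.

Lemma cut_complex_diam_le2 (f : 'I_5 -> E) : injective f ->
  cut_complex_diam_le E 2.
Proof.
move=> finj U V nU nV.
have [sUV|nsUV] := pselect (same_cut U V); first by left; left.
have [cUV|ncUV] := pselect (cuts_cross U V); last first.
  by left; right; exists U; split; [split=> //; left | split].
pose quadrant i := (`[< U (f i) >], `[< V (f i) >]).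
have [i [j [ij qij]]] :
    exists i j, i <> j /\ quadrant i = quadrant j.
  apply: contrapT => nq; suff /leq_card : injective quadrant.
    by rewrite card_ord card_prod card_bool.
  by move=> i j qij; apply: contrapT => ij; apply: nq; exists i, j.
case: qij => eU eV; have [Uij Vij] := (asbool_eq_equiv eU, asbool_eq_equiv eV).
exact: cut_within2_cross (contra_not (@finj i j) ij) Uij Vij nU nV cUV.
Qed.

Lemma zero_dimensional_cuts_cross (f : 'I_4 -> E) : injective f -> zero_dimensional E ->
  exists U V, [/\ nonperipheral_cut U, nonperipheral_cut V & cuts_cross U V].
Proof.
move=> finj zdE.
have fD i j : i != j -> f i <> f j by move=> /eqP ij /finj.
pose a := f (@Ordinal 4 0 isT); pose b := f (@Ordinal 4 1 isT).
pose c := f (@Ordinal 4 2 isT); pose d := f (@Ordinal 4 3 isT).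
have [U [clU Ua Ub nUc nUd]] : exists U, [/\ clopen U, U a, U b, ~ U c & ~ U d].
  by apply: zero_dimensional_sep22 => //; apply: fD.
have [V [clV Va Vc nVb nVd]] : exists V, [/\ clopen V, V a, V c, ~ V b & ~ V d].
  by apply: zero_dimensional_sep22 => //; apply: fD.
have cUV : cuts_cross U V by split; [exists a | exists b | exists c | exists d].
have [nU nV] := cross_nonperipheral clU clV cUV.
by exists U, V.
Qed.

End Cuts.

Theorem mainTheorem2 (E : topologicalType) :
  stone_space E ->
  (exists f : 'I_5 -> E, injective f) ->
  [/\ cut_complex_connected E,
      finite_set [set: E] -> cut_complex_diam_le E 4
    & infinite_set [set: E] -> cut_complex_diam_eq E 2].
Proof.
move=> stoneE [f finj].
have diam2 := cut_complex_diam_le2 finj.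
split.
- by move=> U V nU nV; exists 2; exact: diam2.
- by move=> _ U V nU nV; exact: cut_within_le (diam2 U V nU nV).
- move=> _; split=> // m m2 diam_m.
  have f4inj : injective (f \o widen_ord (leqnSn 4)).
    by apply: inj_comp finj _ => i j /(congr1 val) /= /ord_inj.
  have [U [V [nU nV cUV]]] :=
    zero_dimensional_cuts_cross f4inj (stone_zero_dimensional stoneE).
  by apply: (cuts_cross_not_within1 cUV); exact: cut_within_le (diam_m U V nU nV).
Qed.
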